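(* For any $n\in\mathbb{N}$ there exists $x\in I$ such that $n\,\tilde{\mid}\,x$.
   Context: $\mathbb{N}=\{1,2,3,\dots\}$; $\beta\mathbb{N}$ is the set of ultrafilters on $\mathbb{N}$, with each $n\in\mathbb{N}$ identified with the principal ultrafilter at $n$. For $A\subseteq\mathbb{N}$, $\overline{A}=\{x\in\beta\mathbb{N}:A\in x\}$. $P$ is the set of primes, $L_0=\{1\}$, $L_k=\{a_1\cdots a_k:a_i\in P\}$. $I=\bigcap_{i=0}^\infty\overline{\mathbb{N}\setminus L_i}$ (ultrafilters containing none of the $L_i$). For $x,y\in\beta\mathbb{N}$, $x\,\tilde{\mid}\,y$ iff for every $A\in x$ the set $\{k\in\mathbb{N}:\exists a\in A,\ a\mid k\}$ belongs to $y$. *)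

From mathcomp Require Import all_boot.
Set Implicit Arguments. Unset Strict Implicit. Unset Printing Implicit Defensive.

(* Subsets of nat, as predicates. N = {1,2,...} is the set of positive nats. *)
Definition natset := nat -> Prop.
Definition Npos : natset := fun n => 0 < n.

(* An element of beta N: an ultrafilter on N = {n | 0 < n}, represented as a
   family of subsets of nat containing Npos. *)
Record is_ultrafilter (x : natset -> Prop) : Prop := {
  uf_N     : x Npos;
  uf_empty : ~ x (fun _ => False);
  uf_inter : forall A B, x A -> x B -> x (fun n => A n /\ B n);
  uf_up    : forall A B, x A -> (forall n, A n -> B n) -> x B;
  uf_ultra : forall A, x A \/ x (fun n => Npos n /\ ~ A n) }.

(* The principal ultrafilter at n (identification of n with an element of beta N). *)
Definition principal (n : nat) : natset -> Prop := fun A => A n.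

(* L_k = products of exactly k primes (with repetition); L_0 = {1}. *)
Definition L (k : nat) : natset :=
  fun m => exists s : seq nat, size s = k /\ all prime s /\ m = \prod_(p <- s) p.

(* x \in closure(A)  iff  A \in x. *)
Definition in_closure (A : natset) (x : natset -> Prop) : Prop := x A.

(* I = intersection over i of closure(N \ L_i). *)
Definition inI (x : natset -> Prop) : Prop :=
  forall i : nat, in_closure (fun m => Npos m /\ ~ L i m) x.

Definition tdiv (x y : natset -> Prop) : Prop :=
  forall A, x A -> y (fun k => Npos k /\ exists a, A a /\ Npos a /\ (a %| k)).

From mathcomp Require Import all_boot.
From mathcomp Require Import boolp classical_sets filter.

(* Every product of exactly i primes has 2-adic valuation at most i, so the
   positive multiples of n * 2 ^ i.+1 avoid L_i.  The sets of positive
   multiples of n * 2 ^ k (k in N) form a decreasing chain of nonempty sets;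
   any ultrafilter extending it lies in I and contains the multiples of n,
   hence is divided by n. *)

Lemma prod_primes_gt0 {s : seq nat} : all prime s -> 0 < \prod_(q <- s) q.
Proof.
move=> /allP s_prime.
by rewrite big_seq prodn_cond_gt0 // => q /s_prime /prime_gt0.
Qed.

Lemma logn_prod_primes (p : nat) (s : seq nat) :
  all prime s -> logn p (\prod_(q <- s) q) = count_mem p s.
Proof.
elim: s => [|q s IHs] /=; first by rewrite big_nil logn1.
move=> /andP[q_prime s_prime].
rewrite big_cons (lognM _ (prime_gt0 q_prime) (prod_primes_gt0 s_prime)).
by rewrite IHs // logn_prime // eq_sym.
Qed.

Lemma L_logn_le (p i m : nat) : L i m -> logn p m <= i.
Proof.
by move=> [s [<- [s_prime ->]]]; rewrite logn_prod_primes // count_size.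
Qed.

Lemma L_gt0 {i m : nat} : L i m -> 0 < m.
Proof. by move=> [s [_ [s_prime ->]]]; exact: prod_primes_gt0. Qed.

Lemma pexp_dvd_notL (p i m : nat) : prime p -> p ^ i.+1 %| m -> ~ L i m.
Proof.
move=> p_prime dvd_m Lm; have m_gt0 := L_gt0 Lm.
by move: dvd_m; rewrite pfactor_dvdn // leqNgt ltnS L_logn_le.
Qed.

Definition multiples (d : nat) : natset := fun m => Npos m /\ d %| m.

Lemma is_ultrafilter_UltraFilter (x : set_system nat) :
  UltraFilter x -> x Npos -> is_ultrafilter x.
Proof.
move=> x_ultra xN; split => //.
- by move=> /filter_not_empty.
- by move=> A B; exact: filterI.
- by move=> A B xA AB; exact: filterS xA.
- move=> A; have [|xCA] := in_ultra_setVsetC A x_ultra; first by left.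
  by right; apply: filterS (filterI xN xCA) => m [].
Qed.

Lemma ultrafilter_multiples_chain (D : nat -> nat) :
  (forall k, 0 < D k) -> (forall i j, i <= j -> D i %| D j) ->
  exists x, is_ultrafilter x /\ forall k, x (multiples (D k)).
Proof.
move=> D_gt0 D_dvd.
have chain_filter : ProperFilter (filter_from setT (multiples \o D)).
  apply: filter_from_proper => [|k _]; last first.
    by exists (D k); split; [exact: D_gt0 | exact: dvdnn].
  apply: filter_fromT_filter => [|i j]; first by exists 0.
  exists (maxn i j) => m [m_gt0 dvd_m].
  by split; split => //; apply: dvdn_trans dvd_m; apply: D_dvd;
    rewrite ?leq_maxl ?leq_maxr.
have [x [x_ultra chain_x]] := ultraFilterLemma chain_filter.
have x_multiples k : x (multiples (D k)) by apply: chain_x; exists k.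
exists x; split => //; apply: is_ultrafilter_UltraFilter => //.
by apply: filterS (x_multiples 0) => m [].
Qed.

Theorem corollary3p8 (n : nat) (hn : 0 < n) :
  exists x : natset -> Prop, is_ultrafilter x /\ inI x /\ tdiv (principal n) x.
Proof.
have [x [x_ultra x_multiples]] :
    exists x, is_ultrafilter x /\ forall k, x (multiples (n * 2 ^ k)).
  apply: ultrafilter_multiples_chain => [k | i j ij].
    by rewrite muln_gt0 hn expn_gt0.
  by rewrite dvdn_pmul2l ?dvdn_exp2l.
exists x; split; [done | split].
- move=> i; rewrite /in_closure.
  apply: (uf_up x_ultra (x_multiples i.+1)) => m [m_gt0 dvd_m]; split => //.
  by apply: (@pexp_dvd_notL 2) => //; exact: dvdn_trans (dvdn_mull n _) dvd_m.
- move=> A An; apply: (uf_up x_ultra (x_multiples 0)) => m [m_gt0 dvd_m].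
  by split => //; exists n; rewrite muln1 in dvd_m.
Qed.
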